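(* Let $F$ be an Archimedean vector lattice and $(f_{\alpha})_{\alpha\in A}\subset F_{+}$ a net. The following are equivalent: (i) $f_{\alpha}\xrightarrow{uo}0_{F}$; (ii) if $h\in F_{+}$ is such that $\bigvee_{\alpha\ge\alpha_{0}}h\wedge f_{\alpha}=h$ for every $\alpha_{0}\in A$, then $h=0_{F}$; (iii) for every $h>0_{F}$ there are $e\in(0_{F},h]$ and $\alpha_{0}$ such that $(f_{\alpha}-h)^{+}\perp e$ for every $\alpha\ge\alpha_{0}$. Moreover, if $F$ has the principal projection property, these conditions are equivalent to: (iv) for every $h>0_{F}$ there are a nonzero component $e$ of $h$ and $\alpha_{0}$ such that $P_{e}f_{\alpha}\le e$ for every $\alpha\ge\alpha_{0}$.
   Context: A net order converges to $f$ if there is $G$ with $\bigwedge G=0$ such that for each $g\in G$ the net is eventually in $[f-g,f+g]$; it uo-converges to $f$ if $|f_\alpha-f|\wedge g$ order converges to $0$ for every $g\ge0$. $x\perp y$ means $|x|\wedge|y|=0$. $F$ has the principal projection property (PPP) if for every $e\in F$ the band $\{e\}^{dd}$ is a projection band, i.e. $F=\{e\}^{dd}+\{e\}^{d}$; $P_e$ denotes the corresponding band projection onto $\{e\}^{dd}$. An element $e$ is a component of $h$ if $e\perp h-e$. *)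

From HB Require Import structures.
From mathcomp Require Import all_boot all_order all_algebra.
From mathcomp Require Import reals.
From Stdlib Require Import ClassicalEpsilon.
Set Implicit Arguments. Unset Strict Implicit. Unset Printing Implicit Defensive.
Import Order.TTheory GRing.Theory Num.Theory.
Local Open Scope ring_scope.

Record vector_lattice (R : realType) := VectorLattice {
  vl_space :> lmodType R;
  vl_le : vl_space -> vl_space -> Prop;
  vl_join : vl_space -> vl_space -> vl_space;
  vl_le_refl : forall x, vl_le x x;
  vl_le_trans : forall x y z, vl_le x y -> vl_le y z -> vl_le x z;
  vl_le_anti : forall x y, vl_le x y -> vl_le y x -> x = y;
  vl_le_add : forall x y z, vl_le x y -> vl_le (x + z) (y + z);
  vl_le_scale : forall (a : R) x y, 0 <= a -> vl_le x y -> vl_le (a *: x) (a *: y);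
  vl_join_ub1 : forall x y, vl_le x (vl_join x y);
  vl_join_ub2 : forall x y, vl_le y (vl_join x y);
  vl_join_lub : forall x y z, vl_le x z -> vl_le y z -> vl_le (vl_join x y) z
}.

Section VL.
Variables (R : realType) (F : vector_lattice R).

Definition vle (x y : F) : Prop := vl_le x y.
Definition vlt (x y : F) : Prop := vle x y /\ x <> y.
Definition vjoin (x y : F) : F := vl_join x y.
Definition vmeet (x y : F) : F := - vjoin (- x) (- y).
Definition vabs (x : F) : F := vjoin x (- x).
Definition vpos (x : F) : F := vjoin x 0.

Definition vdisjoint (x y : F) : Prop := vmeet (vabs x) (vabs y) = 0.

Definition archimedean : Prop :=
  forall x y : F, vle 0 x -> vle 0 y -> (forall n : nat, vle (x *+ n) y) -> x = 0.

Definition is_sup (S : F -> Prop) (s : F) : Prop :=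
  (forall x, S x -> vle x s) /\ (forall u, (forall x, S x -> vle x u) -> vle s u).
Definition is_inf (S : F -> Prop) (s : F) : Prop :=
  (forall x, S x -> vle s x) /\ (forall u, (forall x, S x -> vle u x) -> vle u s).

Definition disj_comp (e : F) : F -> Prop := fun x => vdisjoint x e.
Definition band_gen (e : F) : F -> Prop :=
  fun x => forall y, disj_comp e y -> vdisjoint x y.

Definition PPP : Prop :=
  forall e x : F, exists y z, band_gen e y /\ disj_comp e z /\ x = y + z.

(* band projection P_e onto {e}^dd (meaningful under PPP, where the
   decomposition exists and is unique) *)
Definition band_proj (e x : F) : F :=
  epsilon (inhabits (0 : F)) (fun y => band_gen e y /\ disj_comp e (x - y)).

Definition component (e h : F) : Prop := vdisjoint e (h - e).
End VL.

Record directed_set := DirectedSet {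
  ds_car :> Type;
  ds_le : ds_car -> ds_car -> Prop;
  ds_refl : forall a, ds_le a a;
  ds_trans : forall a b c, ds_le a b -> ds_le b c -> ds_le a c;
  ds_up : forall a b, exists c, ds_le a c /\ ds_le b c;
  ds_inhabited : inhabited ds_car
}.

Section Conv.
Variables (R : realType) (F : vector_lattice R) (A : directed_set).

Definition order_conv (f : A -> F) (l : F) : Prop :=
  exists G : F -> Prop, is_inf G 0 /\
    forall g, G g -> exists a0 : A, forall a, ds_le a0 a ->
      vle (l - g) (f a) /\ vle (f a) (l + g).

Definition uo_conv (f : A -> F) (l : F) : Prop :=
  forall g : F, vle 0 g -> order_conv (fun a => vmeet (vabs (f a - l)) g) 0.
End Conv.

(* Call e an eventual gap of h if 0 < e <= h and e <= (h - f_a)^+, i.e.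
   h /\ f_a <= h - e, for all large a; every condition is compared with
   "every h > 0 has an eventual gap".  If (ii) fails at h, some tail of
   h /\ f_a has an upper bound u with h not <= u, and h - h /\ u is a gap;
   conversely a gap keeps h strictly above the suprema of the tails.  A gap
   below (h - f_a)^+ is disjoint from (f_a - h)^+, and (iii) applied to h/2
   yields a gap of h.  For (i), the eventual upper bounds of f_a /\ g have
   infimum 0: a gap e of a positive lower bound k makes this set invariant
   under u |-> u - e, so n e <= g for every n and e = 0 by the Archimedean
   property.  Under PPP, if d is as in (iii) then e = P_d h works in (iv),
   since (P_e f_a - e)^+ lies in {d}^d and in {e}^dd = {d}^dd; conversely
   P_e f_a <= e <= h gives (f_a - h)^+ <= (f_a - P_e f_a)^+, which is
   disjoint from e. *)

From mathcomp Require Import all_boot all_order all_algebra.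
From mathcomp Require Import reals.
From mathcomp Require Import lra.
From Stdlib Require Import ClassicalEpsilon Classical.
Set Implicit Arguments. Unset Strict Implicit.
Import Order.TTheory GRing.Theory Num.Theory.
Local Open Scope ring_scope.

Section VectorLatticeTheory.
Variables (R : realType) (F : vector_lattice R).
Implicit Types x y z u v e d h p : F.

Lemma vle_refl x : vle x x. Proof. exact: vl_le_refl. Qed.

Lemma vle_trans x y z : vle x y -> vle y z -> vle x z.
Proof. exact: vl_le_trans. Qed.

Lemma vle_anti x y : vle x y -> vle y x -> x = y.
Proof. exact: vl_le_anti. Qed.

Lemma vleD2r z x y : vle x y -> vle (x + z) (y + z).
Proof. exact: vl_le_add. Qed.

Lemma vleD2l z x y : vle x y -> vle (z + x) (z + y).
Proof. by rewrite ![z + _]addrC; apply: vleD2r. Qed.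

Lemma vleD x y u v : vle x y -> vle u v -> vle (x + u) (y + v).
Proof. by move=> /(vleD2r u) xy /(vleD2l y); apply: vle_trans. Qed.

Lemma vlerBrDr x y z : vle x (y - z) <-> vle (x + z) y.
Proof.
by split=> [/(vleD2r z)|/(vleD2r (- z))]; rewrite ?subrK ?addrK.
Qed.

Lemma vlerBlDr x y z : vle (x - y) z <-> vle x (z + y).
Proof.
by split=> [/(vleD2r y)|/(vleD2r (- y))]; rewrite ?subrK ?addrK.
Qed.

Lemma vsubr_ge0 x y : vle 0 (y - x) <-> vle x y.
Proof.
by split=> [/(vleD2r x)|/(vleD2r (- x))]; rewrite ?add0r ?subrK ?subrr.
Qed.

Lemma vleN2 x y : vle (- x) (- y) <-> vle y x.
Proof.
split=> [/(vleD2r (x + y))|/(vleD2r (- x - y))].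
  by rewrite addKr addrCA addNr addr0.
by rewrite addNKr addrCA subrr addr0.
Qed.

Lemma vlerDl x y : vle x (x + y) <-> vle 0 y.
Proof.
rewrite -[x in vle x _]addr0.
by split=> [/(vleD2l (- x))|/(vleD2l x)]; rewrite ?addKr.
Qed.

Lemma vaddr_ge0 x y : vle 0 x -> vle 0 y -> vle 0 (x + y).
Proof. by move=> x0 y0; rewrite -(addr0 0); apply: vleD. Qed.

Lemma vleUl x y : vle x (vjoin x y). Proof. exact: vl_join_ub1. Qed.
Lemma vleUr x y : vle y (vjoin x y). Proof. exact: vl_join_ub2. Qed.

Lemma vleUx x y z : vle x z -> vle y z -> vle (vjoin x y) z.
Proof. exact: vl_join_lub. Qed.

Lemma vjoinC x y : vjoin x y = vjoin y x.
Proof. by apply: vle_anti; apply: vleUx; first [apply: vleUl | apply: vleUr]. Qed.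

Lemma vleU2 x y u v : vle x y -> vle u v -> vle (vjoin x u) (vjoin y v).
Proof.
move=> xy uv; apply: vleUx.
  exact: vle_trans xy (vleUl _ _).
exact: vle_trans uv (vleUr _ _).
Qed.

Lemma vjoin_l x y : vle y x -> vjoin x y = x.
Proof.
by move=> yx; apply: vle_anti; [apply: vleUx => //; apply: vle_refl|apply: vleUl].
Qed.

Lemma vjoinDr x y z : vjoin x y + z = vjoin (x + z) (y + z).
Proof.
apply: vle_anti; last by apply: vleUx; apply: vleD2r; [apply: vleUl|apply: vleUr].
by apply/vlerBrDr; apply: vleUx; apply/vlerBrDr; [apply: vleUl|apply: vleUr].
Qed.

Lemma vleIl x y : vle (vmeet x y) x.
Proof. by apply/vleN2; rewrite opprK; apply: vleUl. Qed.

Lemma vleIr x y : vle (vmeet x y) y.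
Proof. by apply/vleN2; rewrite opprK; apply: vleUr. Qed.

Lemma vlexI x y z : vle z x -> vle z y -> vle z (vmeet x y).
Proof. by move=> /vleN2 zx /vleN2 zy; apply/vleN2; rewrite opprK; apply: vleUx. Qed.

Lemma vmeetC x y : vmeet x y = vmeet y x.
Proof. by rewrite /vmeet vjoinC. Qed.

Lemma vleI2 x y u v : vle x y -> vle u v -> vle (vmeet x u) (vmeet y v).
Proof.
move=> xy uv; apply: vlexI.
  exact: vle_trans (vleIl _ _) xy.
exact: vle_trans (vleIr _ _) uv.
Qed.

Lemma vmeet_l x y : vle x y -> vmeet x y = x.
Proof.
by move=> xy; apply: vle_anti; [apply: vleIl|apply: vlexI => //; apply: vle_refl].
Qed.

Lemma vjoin_meet x y : vjoin x y + vmeet x y = x + y.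
Proof.
have joinN : vjoin x y + (- x - y) = vjoin (- y) (- x).
  by rewrite vjoinDr addNKr addrCA subrr addr0.
by rewrite /vmeet [vjoin (- x) _]vjoinC -joinN opprD addNKr opprD !opprK.
Qed.

Lemma vmeetDr x y z : vmeet x y + z = vmeet (x + z) (y + z).
Proof. by apply: oppr_inj; rewrite /vmeet !opprD !opprK vjoinDr. Qed.

Lemma vscale_ge0 (a : R) x : 0 <= a -> vle 0 x -> vle 0 (a *: x).
Proof. by move=> a0 /(vl_le_scale a0); rewrite scaler0. Qed.

Lemma vhalfK x : (2^-1 : R) *: x *+ 2 = x.
Proof.
rewrite scalerMnl; have -> : (2^-1 *+ 2 : R) = 1 by rewrite mulr2n; lra.
exact: scale1r.
Qed.

Lemma vpos_ge0 x : vle 0 (vpos x). Proof. exact: vleUr. Qed.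
Lemma vpos_ge x : vle x (vpos x). Proof. exact: vleUl. Qed.

Lemma vpos_mono x y : vle x y -> vle (vpos x) (vpos y).
Proof. by move=> xy; apply: vleU2 => //; apply: vle_refl. Qed.

Lemma vposB x y : vpos (x - y) = x - vmeet x y.
Proof.
by rewrite /vpos /vmeet opprK [RHS]addrC vjoinDr addNr vjoinC [- y + x]addrC.
Qed.

Lemma vposNE x : vpos x - vpos (- x) = x.
Proof. by have := vjoin_meet x 0; rewrite addr0 /vmeet oppr0. Qed.

Lemma vmeet_pos_neg x : vmeet (vpos x) (vpos (- x)) = 0.
Proof.
apply: (addIr (- vpos (- x))).
by rewrite add0r vmeetDr vposNE subrr /vmeet oppr0.
Qed.

Lemma vabs_ge x : vle x (vabs x). Proof. exact: vleUl. Qed.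
Lemma vabs_geN x : vle (- x) (vabs x). Proof. exact: vleUr. Qed.

Lemma vabsN x : vabs (- x) = vabs x.
Proof. by rewrite /vabs opprK vjoinC. Qed.

Lemma vabs_id x : vle 0 x -> vabs x = x.
Proof.
move=> x0; apply: vjoin_l; apply: (vle_trans _ x0).
by rewrite -oppr0; apply/vleN2.
Qed.

Lemma vabs_ge0 x : vle 0 (vabs x).
Proof.
rewrite -(vhalfK (vabs x)) scalerMnr; apply: vscale_ge0; first lra.
by rewrite mulr2n -(subrr x); apply: vleD; [apply: vabs_ge|apply: vabs_geN].
Qed.

Lemma vabsD x y : vle (vabs (x + y)) (vabs x + vabs y).
Proof.
apply: vleUx; first exact: vleD (vabs_ge x) (vabs_ge y).
by rewrite opprD; apply: vleD (vabs_geN x) (vabs_geN y).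
Qed.

Lemma vpos_le_abs x : vle (vpos x) (vabs x).
Proof. by apply: vleUx; [apply: vabs_ge|apply: vabs_ge0]. Qed.

Lemma vmeetDl_le x y z : vle 0 x -> vle 0 y -> vle 0 z ->
  vle (vmeet (x + y) z) (vmeet x z + vmeet y z).
Proof.
move=> x0 y0 z0; set u := vmeet (x + y) z.
have uxy : vle u (x + y) := vleIl _ _.
have uz : vle u z := vleIr _ _.
have uz0 : vle (- z + u) 0 by rewrite addrC; apply/vlerBlDr; rewrite add0r.
apply/vlerBlDr; rewrite {1}/vmeet opprK addrC vjoinDr.
apply: vlexI; apply: vleUx; try exact: vle_trans uz0 _.
  by rewrite addrC; apply/vlerBlDr.
by rewrite addrC; apply/vlerBlDr; apply: vle_trans uz _; apply/vlerDl.
Qed.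

Lemma vdisjointC x y : vdisjoint x y -> vdisjoint y x.
Proof. by rewrite /vdisjoint vmeetC. Qed.

Lemma vdisjoint_meet x y : vle 0 x -> vle 0 y -> vdisjoint x y <-> vmeet x y = 0.
Proof. by move=> x0 y0; rewrite /vdisjoint !vabs_id. Qed.

Lemma vdisjointxx x : vdisjoint x x -> x = 0.
Proof.
rewrite /vdisjoint (vmeet_l (vle_refl _)) => abs0; apply: vle_anti.
  by rewrite -abs0; apply: vabs_ge.
by apply/vleN2; rewrite oppr0 -abs0; apply: vabs_geN.
Qed.

Lemma vdisjoint_abs_le x y z :
  vle (vabs x) (vabs y) -> vdisjoint y z -> vdisjoint x z.
Proof.
rewrite /vdisjoint => xy yz; apply: vle_anti; last by apply: vlexI; apply: vabs_ge0.
by rewrite -yz; apply: vleI2 xy (vle_refl _).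
Qed.

Lemma vdisjoint_le x y z : vle 0 x -> vle x y -> vdisjoint y z -> vdisjoint x z.
Proof.
by move=> x0 xy; apply: vdisjoint_abs_le; rewrite !vabs_id //; apply: vle_trans xy.
Qed.

Lemma vdisjoint_absl x z : vdisjoint x z -> vdisjoint (vabs x) z.
Proof. by rewrite /vdisjoint (vabs_id (vabs_ge0 x)). Qed.

Lemma vdisjointD x y z : vdisjoint x z -> vdisjoint y z -> vdisjoint (x + y) z.
Proof.
rewrite /vdisjoint => xz yz; apply: vle_anti; last by apply: vlexI; apply: vabs_ge0.
apply: vle_trans (vleI2 (vabsD x y) (vle_refl (vabs z))) _.
rewrite -[0 : F](addr0 0) -{1}xz -{1}yz.
by apply: vmeetDl_le; apply: vabs_ge0.
Qed.

Lemma component_ge0 h e : vle 0 h -> component e h -> vle 0 e.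
Proof.
rewrite /component /vdisjoint => h0 ehe.
have neg0 : vpos (- e) = 0.
  apply: vle_anti; last exact: vpos_ge0.
  rewrite -ehe; apply: vlexI; first by rewrite -(vabsN e); apply: vpos_le_abs.
  apply: vle_trans (vpos_le_abs _); apply: vpos_mono.
  by have := vleD2r (- e) h0; rewrite add0r.
by rewrite -(vposNE e) neg0 subr0; apply: vpos_ge0.
Qed.

Lemma component_le h e : vle 0 h -> component e h -> vle e h.
Proof.
move=> h0 ehe; apply/vsubr_ge0; apply: (component_ge0 h0).
by rewrite /component subKr; apply: vdisjointC.
Qed.

Lemma vle_pos_of_disjoint e p x : vle 0 e -> vle 0 p -> vdisjoint e p ->
  vle (e - p) x -> vle e (vpos x).
Proof.
move=> e0 p0 /(vdisjoint_meet e0 p0) ep0 epx.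
by rewrite -[X in vle X _](subr0 e) -ep0 -vposB; apply: vpos_mono.
Qed.

Lemma vdisjoint_pos_opp e y : vle 0 e -> vle e (vpos y) -> vdisjoint (vpos (- y)) e.
Proof.
move=> e0 ey; apply: vdisjointC; apply: vdisjoint_le e0 ey _.
by apply/vdisjoint_meet; rewrite ?vmeet_pos_neg //; apply: vpos_ge0.
Qed.

Lemma vle_pos_double e h x : vle 0 e -> vle e h -> vdisjoint (vpos (x - h)) e ->
  vle e (vpos (h *+ 2 - x)).
Proof.
move=> e0 eh xhe; apply: vle_pos_of_disjoint e0 (vpos_ge0 _) (vdisjointC xhe) _.
rewrite mulr2n -addrA; apply: vleD eh _.
by rewrite -[h - x]opprB; apply/vleN2; apply: vpos_ge.
Qed.

(* [x /\ g - k /\ x] is disjoint from [e], so adding [e] to [x /\ g] acts as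
   a join with [e + k /\ x <= k]. *)
Lemma vmeet_addr_le x g u k e : vle (vmeet x g) u -> vle k u -> vle k g ->
  vle 0 e -> vle e (vpos (k - x)) -> vle (vmeet x g + e) u.
Proof.
move=> xgu ku kg e0 ekx.
have ekM : vle (e + vmeet k x) k by move: ekx; rewrite vposB => /vlerBrDr.
pose c := vmeet x g - vmeet k x.
have c0 : vle 0 c.
  by apply/vsubr_ge0; apply: vlexI; [apply: vleIr|apply: vle_trans (vleIl _ _) kg].
have c_le : vle c (vpos (- (k - x))).
  by rewrite opprB vposB vmeetC; apply: vleD2r; apply: vleIl.
have cUe : vjoin c e = c + e.
  have /(vdisjoint_meet c0 e0) ce := vdisjoint_le c0 c_le (vdisjoint_pos_opp e0 ekx).
  by rewrite -(vjoin_meet c e) ce addr0.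
have -> : vmeet x g + e = vjoin (vmeet x g) (e + vmeet k x).
  by rewrite -{1}[vmeet x g](subrK (vmeet k x)) -/c addrAC -cUe vjoinDr subrK.
by apply: vleUx => //; apply: vle_trans ekM ku.
Qed.

Lemma band_gen_le e y : band_gen e y -> vdisjoint (vpos (y - e)) e -> vle y e.
Proof.
move=> ye ze; pose z := vpos (y - e).
have z_le : vle z (vabs y + vabs e).
  by apply: vle_trans (vpos_le_abs _) _; rewrite -(vabsN e); apply: vabsD.
have z0 : z = 0.
  apply: vdisjointxx; apply: vdisjoint_le (vpos_ge0 _) z_le _.
  by apply: vdisjointD; apply: vdisjoint_absl; [apply: ye|apply: vdisjointC].
by have := vpos_ge (y - e); rewrite -/z z0 => /vlerBlDr; rewrite add0r.
Qed.

End VectorLatticeTheory.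

Section BandProjection.
Variables (R : realType) (F : vector_lattice R).
Hypothesis ppp : PPP F.
Implicit Types x e d h : F.

Lemma band_projP e x : band_gen e (band_proj e x) /\ disj_comp e (x - band_proj e x).
Proof.
apply: (epsilon_spec (inhabits (0 : F)) (fun y => band_gen e y /\ disj_comp e (x - y))).
have [y [z [ye [ze xyz]]]] := ppp e x.
by exists y; split=> //; rewrite xyz [y + z]addrC addrK.
Qed.

Lemma band_proj_component d h : component (band_proj d h) h.
Proof. by have [dh hd] := band_projP d h; apply: dh. Qed.

Lemma band_proj_neq0 d h : vle 0 d -> vle d h -> d <> 0 -> band_proj d h <> 0.
Proof.
move=> d0 dh dn0 e0; apply: dn0; apply: vdisjointxx; apply: vdisjoint_le d0 dh _.
by have [_] := band_projP d h; rewrite /disj_comp e0 subr0.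
Qed.

Lemma band_proj_tail_le d h x : vle 0 h -> vle 0 d -> vle d h ->
  vdisjoint (vpos (x - h)) d -> vle (band_proj (band_proj d h) x) (band_proj d h).
Proof.
move=> h0 d0 dh xhd; have [ed hed] := band_projP d h.
pose e := band_proj d h; rewrite -/e in ed hed *.
have ehe : component e h := band_proj_component d h.
have e0 : vle 0 e := component_ge0 h0 ehe.
have he0 : vle 0 (h - e) by apply/vsubr_ge0; apply: component_le.
have de : vle d e.
  rewrite -(vmeet_l dh) vmeetC -(subrK e h).
  apply: vle_trans (vmeetDl_le he0 e0 d0) _.
  by move/(vdisjoint_meet he0 d0): hed => ->; rewrite add0r; apply: vleIl.
have [ye sd] := band_projP e x.
pose y := band_proj e x; pose s := x - y; rewrite -/y -/s in ye sd *.
(* [e] lies in [{d}^dd], so [(y - e)^+] is disjoint from [e] once it is from [d]. *)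
apply: band_gen_le ye _; apply: vdisjointC; apply: ed.
have sd' : vdisjoint s d := vdisjointC (vdisjoint_le d0 de (vdisjointC sd)).
apply: (vdisjoint_le (y := vpos (x - h) + vabs (h - e) + vabs s) (vpos_ge0 _)).
  have -> : y - e = x - h + (h - e) - s.
    by rewrite /s opprB !addrA subrK addrAC [x - e - x]addrAC subrr add0r addrC.
  apply: vleUx.
    by apply: vleD; [apply: vleD; [apply: vpos_ge|apply: vabs_ge]|apply: vabs_geN].
  by apply: vaddr_ge0; [apply: vaddr_ge0; [apply: vpos_ge0|]|]; apply: vabs_ge0.
by apply: vdisjointD; [apply: vdisjointD|]; try apply: vdisjoint_absl.
Qed.

Lemma band_proj_excess_disjoint e h x : vle 0 h -> component e h ->
  vle (band_proj e x) e -> vdisjoint (vpos (x - h)) e.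
Proof.
move=> h0 ehe ye; have [_ sd] := band_projP e x.
apply: vdisjoint_le (vpos_ge0 _) _ (vdisjoint_absl sd).
apply: vle_trans (vpos_le_abs _); apply: vpos_mono; apply: vleD2l; apply/vleN2.
exact: vle_trans ye (component_le h0 ehe).
Qed.

End BandProjection.

Section NullNets.
Variables (R : realType) (F : vector_lattice R) (A : directed_set) (f : A -> F).
Hypothesis f_ge0 : forall a, vle 0 (f a).

Definition tail_meet (h : F) (a0 : A) : F -> Prop :=
  fun x => exists a, ds_le a0 a /\ x = vmeet h (f a).

Definition tails_sup_only0 : Prop :=
  forall h : F, vle 0 h -> (forall a0, is_sup (tail_meet h a0) h) -> h = 0.

Definition eventual_gap (h e : F) : Prop :=
  exists a0 : A, forall a, ds_le a0 a -> vle e (vpos (h - f a)).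

Definition has_eventual_gaps : Prop :=
  forall h : F, vlt 0 h -> exists e : F, vlt 0 e /\ vle e h /\ eventual_gap h e.

Definition has_disjoint_excess : Prop :=
  forall h : F, vlt 0 h -> exists e : F, vlt 0 e /\ vle e h /\
    exists a0 : A, forall a, ds_le a0 a -> vdisjoint (vpos (f a - h)) e.

Definition has_dominating_components : Prop :=
  forall h : F, vlt 0 h -> exists e : F, component e h /\ e <> 0 /\
    exists a0 : A, forall a, ds_le a0 a -> vle (band_proj e (f a)) e.

Lemma tails_sup_only0_of_uo : uo_conv f 0 -> tails_sup_only0.
Proof.
move=> fuo h h0 h_sup; have [G [[_ G_glb] G_tail]] := fuo h h0.
apply: vle_anti => //; apply: G_glb => g Gg.
have [a0 ev] := G_tail g Gg.
apply: (h_sup a0).2 => _ [a [a0a ->]].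
by have := (ev a a0a).2; rewrite subr0 vabs_id // add0r vmeetC.
Qed.

Lemma gap_of_not_tail_sup h a0 : vle 0 h -> ~ is_sup (tail_meet h a0) h ->
  exists e : F, vlt 0 e /\ vle e h /\ eventual_gap h e.
Proof.
move=> h0 not_sup.
have tail_a0 a : ds_le a0 a -> tail_meet h a0 (vmeet h (f a)) by exists a.
have [u [u_ub h_u]] : exists u, (forall x, tail_meet h a0 x -> vle x u) /\ ~ vle h u.
  apply: NNPP => no_u; apply: not_sup; split=> [_ [a [_ ->]]|u u_ub].
    exact: vleIl.
  by apply: NNPP => h_u; apply: no_u; exists u.
have meet_le a : ds_le a0 a -> vle (vmeet h (f a)) (vmeet h u).
  by move=> a0a; apply: vlexI; [apply: vleIl|apply: u_ub; apply: tail_a0].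
exists (h - vmeet h u); split; [split|split].
- by apply/vsubr_ge0; apply: vleIl.
- move/esym/eqP; rewrite subr_eq0 => /eqP hu; apply: h_u.
  by rewrite {1}hu; apply: vleIr.
- apply/vlerBlDr; apply/vlerDl; apply: vle_trans (meet_le a0 (ds_refl a0)).
  exact: vlexI.
- by exists a0 => a a0a; rewrite vposB; apply: vleD2l; apply/vleN2; apply: meet_le.
Qed.

Lemma tail_sup_gap_eq0 h e : vle 0 e -> eventual_gap h e ->
  (forall a0, is_sup (tail_meet h a0) h) -> e = 0.
Proof.
move=> e0 [a0 gap] h_sup.
have : vle h (h - e).
  apply: (h_sup a0).2 => _ [a [a0a ->]].
  by apply/vlerBrDr; rewrite addrC; apply/vlerBrDr; rewrite -vposB; apply: gap.
move=> /(vleD2l (- h)); rewrite addNr addKr -[X in vle X _]oppr0 => /vleN2 e_le0.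
exact: vle_anti e_le0 e0.
Qed.

Lemma eventual_gapsP : tails_sup_only0 <-> has_eventual_gaps.
Proof.
split=> [only0 h [h0 hn0]|gaps h h0 h_sup].
  have [a0 not_sup] : exists a0, ~ is_sup (tail_meet h a0) h.
    by apply: not_all_ex_not => all_sup; apply: hn0; rewrite (only0 h h0 all_sup).
  exact: gap_of_not_tail_sup not_sup.
apply: NNPP => hn0.
have [e [[e0 en0] [_ e_gap]]] := gaps h (conj h0 (fun e => hn0 (esym e))).
exact: en0 (esym (tail_sup_gap_eq0 e0 e_gap h_sup)).
Qed.

Lemma uo_of_eventual_gaps : archimedean F -> has_eventual_gaps -> uo_conv f 0.
Proof.
move=> arch gaps g g0.
pose G u := exists a0 : A, forall a, ds_le a0 a -> vle (vmeet (f a) g) u.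
have G_ge0 u : G u -> vle 0 u.
  by move=> [a0 ev]; apply: vle_trans (ev a0 (ds_refl a0)); apply: vlexI.
have Gg : G g by case: (ds_inhabited A) => a0; exists a0 => a _; apply: vleIr.
exists G; split; last first.
  move=> u Gu; have [a0 ev] := Gu; exists a0 => a a0a.
  rewrite subr0 vabs_id // sub0r add0r; split; last exact: ev.
  apply: vle_trans (vlexI (f_ge0 a) g0).
  by rewrite -oppr0; apply/vleN2; apply: G_ge0.
split=> // w w_lb; pose k := vpos w.
have k_lb u : G u -> vle k u.
  by move=> Gu; apply: vleUx; [apply: w_lb|apply: G_ge0].
have k0 : k = 0; last by rewrite -k0; apply: vpos_ge.
apply: NNPP => kn0.
have [e [[e0 en0] [_ [a0 gap]]]] := gaps k (conj (vpos_ge0 w) (fun e => kn0 (esym e))).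
have shift u : G u -> G (u - e).
  move=> [a1 ev]; have [a2 [a02 a12]] := ds_up a0 a1.
  exists a2 => a a2a; apply/vlerBrDr.
  apply: vmeet_addr_le (ev a (ds_trans a12 a2a)) (k_lb u _) (k_lb g Gg) e0 _.
    by exists a1.
  exact: gap a (ds_trans a02 a2a).
have Gn n : G (g - e *+ n).
  by elim: n => [|n IH]; rewrite ?subr0 // mulrSr opprD addrA; apply: shift.
apply: en0; symmetry; apply: (arch e g e0 g0) => n.
by apply/vsubr_ge0; apply: G_ge0.
Qed.

Lemma disjoint_excessP : has_eventual_gaps <-> has_disjoint_excess.
Proof.
split=> [gaps h /gaps [e [[e0 en0] [eh [a0 gap]]]]|excess h [h0 hn0]].
  exists e; do 2!split=> //; exists a0 => a a0a.
  by rewrite -opprB; apply: vdisjoint_pos_opp; last exact: gap.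
pose k := (2^-1 : R) *: h.
have k0 : vle 0 k by apply: vscale_ge0 => //; lra.
have kn0 : 0 <> k by move=> k0'; apply: hn0; rewrite -(vhalfK h) -/k -k0' mul0rn.
have [e [[e0 en0] [ek [a0 disj]]]] := excess k (conj k0 kn0).
exists e; do 2!split=> //.
  by apply: vle_trans ek _; rewrite -(vhalfK h) -/k mulr2n; apply/vlerDl.
by exists a0 => a a0a; rewrite -(vhalfK h); apply: vle_pos_double; last exact: disj.
Qed.

Lemma dominating_componentsP : PPP F -> has_disjoint_excess <-> has_dominating_components.
Proof.
move=> ppp; split=> [excess h [h0 hn0]|dom h [h0 hn0]].
  have [d [[d0 dn0] [dh [a0 disj]]]] := excess h (conj h0 hn0).
  exists (band_proj d h); split; first exact: band_proj_component.
  split; first by apply: band_proj_neq0 => // d_eq0; apply: dn0.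
  by exists a0 => a a0a; apply: band_proj_tail_le => //; apply: disj.
have [e [ehe [en0 [a0 dom_e]]]] := dom h (conj h0 hn0).
exists e; split; first by split; [apply: component_ge0 ehe|apply: nesym].
split; first exact: component_le.
by exists a0 => a a0a; apply: band_proj_excess_disjoint => //; apply: dom_e.
Qed.

End NullNets.

Theorem theorem6p2 (R : realType) (F : vector_lattice R) (A : directed_set)
  (f : A -> F) :
  archimedean F ->
  (forall a, vle 0 (f a)) ->
  let cond_i := uo_conv f 0 in
  let cond_ii := forall h : F, vle 0 h ->
      (forall a0 : A, is_sup (fun x => exists a, ds_le a0 a /\ x = vmeet h (f a)) h) ->
      h = 0 in
  let cond_iii := forall h : F, vlt 0 h ->
      exists e : F, vlt 0 e /\ vle e h /\
        exists a0 : A, forall a, ds_le a0 a -> vdisjoint (vpos (f a - h)) e in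
  let cond_iv := forall h : F, vlt 0 h ->
      exists e : F, component e h /\ e <> 0 /\
        exists a0 : A, forall a, ds_le a0 a -> vle (band_proj e (f a)) e in
  ((cond_i <-> cond_ii) /\ (cond_ii <-> cond_iii)) /\
  (PPP F -> (cond_i <-> cond_iv)).
Proof.
move=> arch f_ge0; cbv zeta.
have uo_only0 : uo_conv f 0 <-> tails_sup_only0 f.
  split; first exact: tails_sup_only0_of_uo.
  by move/(eventual_gapsP f_ge0); apply: uo_of_eventual_gaps.
have only0_excess : tails_sup_only0 f <-> has_disjoint_excess f.
  exact: iff_trans (eventual_gapsP f_ge0) (disjoint_excessP f).
split=> [//|ppp]; apply: iff_trans uo_only0 (iff_trans only0_excess _).
exact: dominating_componentsP.
Qed.
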